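(* Let $W$ be a central type and let $t$ be a closed expression with $\vdash t:W$ derived in the ordered fragment $\mathcal{O}$ (i.e. without the rule (struct)). For every value $v$ with $\vdash v:W$ and all lists of resources $l,l'$, if $\langle t\mid\star\mid l\rangle^+\rightsquigarrow^*\langle v\mid\star\mid l'\rangle^{\varepsilon}$ for some polarity $\varepsilon$, then $l'=l$.
   Context: Polarities are $\varepsilon\in\{+,-\}$. Types: positive $P,Q ::= R \mid 1 \mid A\otimes B \mid A\oplus B$; negative $N,M ::= A\multimap B \mid A\,\&\,B$; $\varpi(P)=+$, $\varpi(N)=-$ ($R$ is an atomic type of resources). Central types are $W ::= 1\mid W\otimes W'\mid W\oplus W'$. Fix variables and resource constants $r_n$ ($n\in\mathbb N$). Expressions $t,u$ and values $v,w$: $t,u ::= v \mid (\mathrm{let}\ x^+=t\ \mathrm{in}\ u)^+ \mid (\mathrm{let}\ x^-=v\ \mathrm{in}\ u)^+ \mid \delta(v,(x,y).t)^+ \mid \delta(v,().t)^+ \mid \delta(v,x.t,y.u)^+ \mid (v\,w)^+ \mid (\pi_1 v)^+ \mid (\pi_2 v)^+$; $v,w ::= (\mathrm{let}\ x^+=t\ \mathrm{in}\ v)^- \mid (\mathrm{let}\ x^-=v\ \mathrm{in}\ w)^- \mid \delta(v,(x,y).w)^- \mid \delta(v,().w)^- \mid \delta(v,x.w,y.w')^- \mid (v\,w)^- \mid (\pi_1 v)^- \mid (\pi_2 v)^- \mid x \mid \mathrm{new} \mid \mathrm{delete} \mid (v,w) \mid () \mid \iota_1 v \mid \iota_2 v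 \mid \lambda x.t \mid \langle t,u\rangle \mid r_n$. $t[v/x]$ is capture-avoiding substitution. Contexts are finite lists of typed variables. Typing rules of $\mathcal{L}$ ($v,w$ range over values): (var) $x:A\vdash x:A$. (struct) from $\Gamma\vdash t:A$ and a type-preserving bijection $\sigma$ from entries of $\Gamma$ to entries of $\Gamma'$ (permutation plus renaming) derive $\Gamma'\vdash t[\sigma]:A$. $\vdash\mathrm{new}:1\multimap(R\oplus 1)$; $\vdash\mathrm{delete}:R\multimap 1$. (let) from $\Delta\vdash t:A$, $\Gamma,x:A\vdash u:B$ derive $\Gamma,\Delta\vdash(\mathrm{let}\ x^{\varpi(A)}=t\ \mathrm{in}\ u)^{\varpi(B)}:B$. From $\Gamma\vdash v:A$, $\Delta\vdash w:B$ derive $\Gamma,\Delta\vdash(v,w):A\otimes B$; from $\Delta\vdash v:A\otimes B$, $\Gamma,x:A,y:B,\Gamma'\vdash t:C$ derive $\Gamma,\Delta,\Gamma'\vdash\delta(v,(x,y).t)^{\varpi(C)}:C$. $\vdash():1$; from $\Delta\vdash v:1$, $\Gamma,\Gamma'\vdash t:A$ derive $\Gamma,\Delta,\Gamma'\vdash\delta(v,().t)^{\varpi(A)}:A$. From $\Gamma\vdash v:A$ derive $\Gamma\vdash\iota_1v:A\oplus B$; from $\Gamma\vdash v:B$ derive $\Gamma\vdash\iota_2v:A\oplus B$; from $\Delta\vdash v:A\oplus B$, $\Gamma,x:A,\Gamma'\vdash t:C$, $\Gamma,y:B,\Gamma'\vdash u:C$ derive $\Gamma,\Delta,\Gamma'\vdash\delta(v,x.t,y.u)^{\varpi(C)}:C$.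 From $x:A,\Gamma\vdash t:B$ derive $\Gamma\vdash\lambda x.t:A\multimap B$; from $\Gamma\vdash w:A$, $\Delta\vdash v:A\multimap B$ derive $\Gamma,\Delta\vdash(v\,w)^{\varpi(B)}:B$. From $\Gamma\vdash t:A$, $\Gamma\vdash u:B$ derive $\Gamma\vdash\langle t,u\rangle:A\&B$; from $\Gamma\vdash v:A_1\&A_2$ derive $\Gamma\vdash(\pi_iv)^{\varpi(A_i)}:A_i$. The ordered fragment $\mathcal{O}$ consists of derivations not using (struct). Machine: stacks $s ::= \star \mid v^\varepsilon\cdot s \mid \pi_i^\varepsilon\cdot s \mid (x^+.u)^\varepsilon\cdot s$; lists of resources $l ::= []\mid r_n::l$ (the freelist); commands $\langle t\mid s\mid l\rangle^\varepsilon$; $\rightsquigarrow^*$ is the reflexive-transitive closure of the one-step reduction $\rightsquigarrow$ given by ($i\in\{1,2\}$): $\langle(\mathrm{let}\ x^-=v\ \mathrm{in}\ t)^\varepsilon\mid s\mid l\rangle^\varepsilon\rightsquigarrow\langle t[v/x]\mid s\mid l\rangle^\varepsilon$; $\langle(\mathrm{let}\ x^+=t\ \mathrm{in}\ u)^\varepsilon\mid s\mid l\rangle^\varepsilon\rightsquigarrow\langle t\mid (x^+.u)^\varepsilon\cdot s\mid l\rangle^+$; $\langle v\mid (x^+.t)^\varepsilon\cdot s\mid l\rangle^+\rightsquigarrow\langle t[v/x]\mid s\mid l\rangle^\varepsilon$; $\langle (v\,w)^\varepsilon\mid s\mid l\rangle^\varepsilon\rightsquigarrow\langle v\mid w^\varepsilon\cdot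 s\mid l\rangle^-$; $\langle \lambda x.t\mid v^\varepsilon\cdot s\mid l\rangle^-\rightsquigarrow\langle t[v/x]\mid s\mid l\rangle^\varepsilon$; $\langle (\pi_i v)^\varepsilon\mid s\mid l\rangle^\varepsilon\rightsquigarrow\langle v\mid \pi_i^\varepsilon\cdot s\mid l\rangle^-$; $\langle \langle t_1,t_2\rangle\mid \pi_i^\varepsilon\cdot s\mid l\rangle^-\rightsquigarrow\langle t_i\mid s\mid l\rangle^\varepsilon$; $\langle \delta((v,w),(x,y).t)^\varepsilon\mid s\mid l\rangle^\varepsilon\rightsquigarrow\langle t[v/x,w/y]\mid s\mid l\rangle^\varepsilon$; $\langle \delta((),().t)^\varepsilon\mid s\mid l\rangle^\varepsilon\rightsquigarrow\langle t\mid s\mid l\rangle^\varepsilon$; $\langle \delta(\iota_i v,x_1.t_1,x_2.t_2)^\varepsilon\mid s\mid l\rangle^\varepsilon\rightsquigarrow\langle t_i[v/x_i]\mid s\mid l\rangle^\varepsilon$; $\langle \mathrm{new}\mid ()^{\varepsilon}\cdot s\mid r_n::l\rangle^-\rightsquigarrow\langle \iota_1 r_n\mid s\mid l\rangle^+$; $\langle \mathrm{new}\mid ()^{\varepsilon}\cdot s\mid []\rangle^-\rightsquigarrow\langle \iota_2 ()\mid s\mid []\rangle^+$; $\langle \mathrm{delete}\mid r_n^{\varepsilon}\cdot s\mid l\rangle^-\rightsquigarrow\langle ()\mid s\mid r_n::l\rangle^+$. *)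

(* Locally nameless representation of the calculus L:
   bound variables are de Bruijn indices (BVar), free variables are
   names (FVar : nat).  Terms are thus identified up to alpha-conversion
   and substitution t[v/x] of a bound variable is "opening". *)
From Stdlib Require Import List Arith Permutation.
Import ListNotations.

Inductive pol : Type := PPos | PNeg.

Inductive ty : Type :=
| TR : ty
| TOne : ty
| TTensor : ty -> ty -> ty
| TPlus : ty -> ty -> ty
| TLolli : ty -> ty -> ty
| TWith : ty -> ty -> ty.

Definition polarity (A : ty) : pol :=
  match A with
  | TLolli _ _ | TWith _ _ => PNeg
  | _ => PPos
  end.

Inductive central : ty -> Prop :=
| central_one : central TOne
| central_tensor W W' : central W -> central W' -> central (TTensor W W')
| central_plus W W' : central W -> central W' -> central (TPlus W W').

Inductive idx : Type := I1 | I2.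

(* Raw terms (the grammar classes "expression" / "value" are the
   predicates is_exp / is_val below).
   - Let p t u q      = (let x^p = t in u)^q        (x bound, index 0, in u)
   - DPair q v t      = delta(v,(x,y).t)^q          (in t: x = BVar 1, y = BVar 0)
   - DUnit q v t      = delta(v,().t)^q
   - DCase q v t u    = delta(v, x.t, y.u)^q        (index 0 in t resp. u)
   - App q v w        = (v w)^q
   - Proj q i v       = (pi_i v)^q
   - Lam t            = lambda x. t                 (index 0 in t)
   - Withp t u        = < t , u >
   - Res n            = resource constant r_n *)
Inductive term : Type :=
| BVar : nat -> term
| FVar : nat -> term
| Let : pol -> term -> term -> pol -> term
| DPair : pol -> term -> term -> term
| DUnit : pol -> term -> term -> term
| DCase : pol -> term -> term -> term -> term
| App : pol -> term -> term -> term
| Proj : pol -> idx -> term -> term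
| New : term
| Delete : term
| Pair : term -> term -> term
| Unit : term
| Inj : idx -> term -> term
| Lam : term -> term
| Withp : term -> term -> term
| Res : nat -> term.

Inductive is_val : term -> Prop :=
| val_let_pos t v : is_exp t -> is_val v -> is_val (Let PPos t v PNeg)
| val_let_neg v w : is_val v -> is_val w -> is_val (Let PNeg v w PNeg)
| val_dpair v w : is_val v -> is_val w -> is_val (DPair PNeg v w)
| val_dunit v w : is_val v -> is_val w -> is_val (DUnit PNeg v w)
| val_dcase v w w' : is_val v -> is_val w -> is_val w' -> is_val (DCase PNeg v w w')
| val_app v w : is_val v -> is_val w -> is_val (App PNeg v w)
| val_proj i v : is_val v -> is_val (Proj PNeg i v)
| val_bvar n : is_val (BVar n)
| val_fvar x : is_val (FVar x)
| val_new : is_val New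
| val_delete : is_val Delete
| val_pair v w : is_val v -> is_val w -> is_val (Pair v w)
| val_unit : is_val Unit
| val_inj i v : is_val v -> is_val (Inj i v)
| val_lam t : is_exp t -> is_val (Lam t)
| val_withp t u : is_exp t -> is_exp u -> is_val (Withp t u)
| val_res n : is_val (Res n)
with is_exp : term -> Prop :=
| exp_val v : is_val v -> is_exp v
| exp_let_pos t u : is_exp t -> is_exp u -> is_exp (Let PPos t u PPos)
| exp_let_neg v u : is_val v -> is_exp u -> is_exp (Let PNeg v u PPos)
| exp_dpair v t : is_val v -> is_exp t -> is_exp (DPair PPos v t)
| exp_dunit v t : is_val v -> is_exp t -> is_exp (DUnit PPos v t)
| exp_dcase v t u : is_val v -> is_exp t -> is_exp u -> is_exp (DCase PPos v t u)
| exp_app v w : is_val v -> is_val w -> is_exp (App PPos v w)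
| exp_proj i v : is_val v -> is_exp (Proj PPos i v).

Fixpoint open_rec (k : nat) (u : term) (t : term) : term :=
  match t with
  | BVar i => if Nat.eqb i k then u else BVar i
  | FVar x => FVar x
  | Let p t1 t2 q => Let p (open_rec k u t1) (open_rec (S k) u t2) q
  | DPair q v t1 => DPair q (open_rec k u v) (open_rec (S (S k)) u t1)
  | DUnit q v t1 => DUnit q (open_rec k u v) (open_rec k u t1)
  | DCase q v t1 t2 => DCase q (open_rec k u v) (open_rec (S k) u t1) (open_rec (S k) u t2)
  | App q v w => App q (open_rec k u v) (open_rec k u w)
  | Proj q i v => Proj q i (open_rec k u v)
  | New => New
  | Delete => Delete
  | Pair v w => Pair (open_rec k u v) (open_rec k u w)
  | Unit => Unit
  | Inj i v => Inj i (open_rec k u v)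
  | Lam t1 => Lam (open_rec (S k) u t1)
  | Withp t1 t2 => Withp (open_rec k u t1) (open_rec k u t2)
  | Res n => Res n
  end.

Definition open1 (v t : term) : term := open_rec 0 v t.
Definition open2 (v w t : term) : term := open_rec 0 w (open_rec 1 v t).

Fixpoint fv (t : term) : list nat :=
  match t with
  | BVar _ => []
  | FVar x => [x]
  | Let _ t1 t2 _ => fv t1 ++ fv t2
  | DPair _ v t1 => fv v ++ fv t1
  | DUnit _ v t1 => fv v ++ fv t1
  | DCase _ v t1 t2 => fv v ++ fv t1 ++ fv t2
  | App _ v w => fv v ++ fv w
  | Proj _ _ v => fv v
  | New | Delete | Unit | Res _ => []
  | Pair v w => fv v ++ fv w
  | Inj _ v => fv v
  | Lam t1 => fv t1
  | Withp t1 t2 => fv t1 ++ fv t2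
  end.

Fixpoint rename (f : nat -> nat) (t : term) : term :=
  match t with
  | BVar i => BVar i
  | FVar x => FVar (f x)
  | Let p t1 t2 q => Let p (rename f t1) (rename f t2) q
  | DPair q v t1 => DPair q (rename f v) (rename f t1)
  | DUnit q v t1 => DUnit q (rename f v) (rename f t1)
  | DCase q v t1 t2 => DCase q (rename f v) (rename f t1) (rename f t2)
  | App q v w => App q (rename f v) (rename f w)
  | Proj q i v => Proj q i (rename f v)
  | New => New
  | Delete => Delete
  | Pair v w => Pair (rename f v) (rename f w)
  | Unit => Unit
  | Inj i v => Inj i (rename f v)
  | Lam t1 => Lam (rename f t1)
  | Withp t1 t2 => Withp (rename f t1) (rename f t2)
  | Res n => Res n
  end.

Definition ctx := list (nat * ty).
Definition ok (G : ctx) : Prop := NoDup (map fst G).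

Definition pick {X : Type} (i : idx) (a b : X) : X :=
  match i with I1 => a | I2 => b end.

(* typed s G t A :  G |- t : A.
   s = true : the full system L (rule (struct) allowed);
   s = false : the ordered fragment O (no (struct)). *)
Inductive typed (s : bool) : ctx -> term -> ty -> Prop :=
| ty_var x A : typed s [(x, A)] (FVar x) A
| ty_struct G G' t A (f : nat -> nat) :
    s = true ->
    typed s G t A ->
    ok G' ->
    Permutation (map (fun e => (f (fst e), snd e)) G) G' ->
    typed s G' (rename f t) A
| ty_new : typed s [] New (TLolli TOne (TPlus TR TOne))
| ty_delete : typed s [] Delete (TLolli TR TOne)
| ty_let G D t u x A B :
    typed s D t A ->
    ~ In x (fv u) ->
    typed s (G ++ [(x, A)]) (open1 (FVar x) u) B ->
    ok (G ++ D) ->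
    typed s (G ++ D) (Let (polarity A) t u (polarity B)) B
| ty_pair G D v w A B :
    typed s G v A -> typed s D w B ->
    ok (G ++ D) ->
    typed s (G ++ D) (Pair v w) (TTensor A B)
| ty_dpair G D G' v t x y A B C :
    typed s D v (TTensor A B) ->
    x <> y -> ~ In x (fv t) -> ~ In y (fv t) ->
    typed s (G ++ [(x, A); (y, B)] ++ G') (open2 (FVar x) (FVar y) t) C ->
    ok (G ++ D ++ G') ->
    typed s (G ++ D ++ G') (DPair (polarity C) v t) C
| ty_unit : typed s [] Unit TOne
| ty_dunit G D G' v t A :
    typed s D v TOne ->
    typed s (G ++ G') t A ->
    ok (G ++ D ++ G') ->
    typed s (G ++ D ++ G') (DUnit (polarity A) v t) A
| ty_inj1 G v A B : typed s G v A -> typed s G (Inj I1 v) (TPlus A B)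
| ty_inj2 G v A B : typed s G v B -> typed s G (Inj I2 v) (TPlus A B)
| ty_dcase G D G' v t u x y A B C :
    typed s D v (TPlus A B) ->
    ~ In x (fv t) ->
    typed s (G ++ [(x, A)] ++ G') (open1 (FVar x) t) C ->
    ~ In y (fv u) ->
    typed s (G ++ [(y, B)] ++ G') (open1 (FVar y) u) C ->
    ok (G ++ D ++ G') ->
    typed s (G ++ D ++ G') (DCase (polarity C) v t u) C
| ty_lam G t x A B :
    ~ In x (fv t) ->
    typed s ((x, A) :: G) (open1 (FVar x) t) B ->
    typed s G (Lam t) (TLolli A B)
| ty_app G D v w A B :
    typed s G w A -> typed s D v (TLolli A B) ->
    ok (G ++ D) ->
    typed s (G ++ D) (App (polarity B) v w) B
| ty_withp G t u A B :
    typed s G t A -> typed s G u B ->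
    typed s G (Withp t u) (TWith A B)
| ty_proj G v i A1 A2 :
    typed s G v (TWith A1 A2) ->
    typed s G (Proj (polarity (pick i A1 A2)) i v) (pick i A1 A2).

Inductive frame : Type :=
| FArg : term -> pol -> frame
| FProj : idx -> pol -> frame
| FLet : term -> pol -> frame.         (* (x^+.u)^eps, x bound at index 0 in u *)

Definition stack := list frame.        (* [] is the empty stack (star) *)

Record cmd : Type := Cmd { c_term : term; c_stack : stack; c_free : list nat; c_pol : pol }.

Inductive step : cmd -> cmd -> Prop :=
| st_let_neg v t e s l :
    step (Cmd (Let PNeg v t e) s l e) (Cmd (open1 v t) s l e)
| st_let_pos t u e s l :
    step (Cmd (Let PPos t u e) s l e) (Cmd t (FLet u e :: s) l PPos)
| st_pop v t e s l :
    is_val v ->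
    step (Cmd v (FLet t e :: s) l PPos) (Cmd (open1 v t) s l e)
| st_app v w e s l :
    step (Cmd (App e v w) s l e) (Cmd v (FArg w e :: s) l PNeg)
| st_lam t v e s l :
    step (Cmd (Lam t) (FArg v e :: s) l PNeg) (Cmd (open1 v t) s l e)
| st_proj i v e s l :
    step (Cmd (Proj e i v) s l e) (Cmd v (FProj i e :: s) l PNeg)
| st_withp i t1 t2 e s l :
    step (Cmd (Withp t1 t2) (FProj i e :: s) l PNeg) (Cmd (pick i t1 t2) s l e)
| st_dpair v w t e s l :
    step (Cmd (DPair e (Pair v w) t) s l e) (Cmd (open2 v w t) s l e)
| st_dunit t e s l :
    step (Cmd (DUnit e Unit t) s l e) (Cmd t s l e)
| st_dcase i v t1 t2 e s l :
    step (Cmd (DCase e (Inj i v) t1 t2) s l e) (Cmd (open1 v (pick i t1 t2)) s l e)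
| st_new_some e s n l :
    step (Cmd New (FArg Unit e :: s) (n :: l) PNeg) (Cmd (Inj I1 (Res n)) s l PPos)
| st_new_none e s :
    step (Cmd New (FArg Unit e :: s) [] PNeg) (Cmd (Inj I2 Unit) s [] PPos)
| st_delete n e s l :
    step (Cmd Delete (FArg (Res n) e :: s) l PNeg) (Cmd Unit s (n :: l) PPos).

Inductive star : cmd -> cmd -> Prop :=
| star_refl c : star c c
| star_step c1 c2 c3 : step c1 c2 -> star c2 c3 -> star c1 c3.

(* Subject reduction for the machine, in a typing system for runtime terms in
   which a resource constant r_n is typed by a context entry r_n : R that keeps
   its place in the ordered context like a variable.  The invariant is that the
   resources held by the stack and by the focused term, read in context order
   and followed by the free list, always spell the initial free list: [new]
   moves the head of the free list to the end of the context, and since the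
   ordered discipline forbids exchange, the only resource [delete] can consume
   is that last one, which it puts back on the free list.  A value of central
   type holds no resource, so a run ending in such a value restores the free
   list. *)

From Stdlib Require Import List Arith Lia.
Import ListNotations.

Fixpoint subst (z : nat) (s t : term) : term :=
  match t with
  | BVar i => BVar i
  | FVar y => if Nat.eqb y z then s else FVar y
  | Let p t1 t2 q => Let p (subst z s t1) (subst z s t2) q
  | DPair q v t1 => DPair q (subst z s v) (subst z s t1)
  | DUnit q v t1 => DUnit q (subst z s v) (subst z s t1)
  | DCase q v t1 t2 => DCase q (subst z s v) (subst z s t1) (subst z s t2)
  | App q v w => App q (subst z s v) (subst z s w)
  | Proj q i v => Proj q i (subst z s v)
  | New => New
  | Delete => Delete
  | Pair v w => Pair (subst z s v) (subst z s w)
  | Unit => Unit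
  | Inj i v => Inj i (subst z s v)
  | Lam t1 => Lam (subst z s t1)
  | Withp t1 t2 => Withp (subst z s t1) (subst z s t2)
  | Res n => Res n
  end.

Definition lc (t : term) : Prop := forall k u, open_rec k u t = t.

Lemma subst_fresh z s t : ~ In z (fv t) -> subst z s t = t.
Proof.
  induction t; simpl; rewrite ?in_app_iff; intros Hz; f_equal; try firstorder.
  destruct (Nat.eqb_spec n z); subst; tauto.
Qed.

Lemma fv_subst z s t y : In y (fv (subst z s t)) -> In y (fv t) \/ In y (fv s).
Proof.
  induction t; simpl; rewrite ?in_app_iff; try (destruct (Nat.eqb_spec n z); simpl); tauto.
Qed.

Lemma fv_open_rec t k u y : In y (fv (open_rec k u t)) -> In y (fv t) \/ In y (fv u).
Proof.
  revert k; induction t; intros k; simpl; rewrite ?in_app_iff;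
    try (destruct (Nat.eqb_spec n k); simpl); firstorder.
Qed.

Lemma fv_open_rec_incl t k u : incl (fv t) (fv (open_rec k u t)).
Proof.
  revert k; induction t; intros k y; simpl; rewrite ?in_app_iff; firstorder.
Qed.

Lemma subst_open_rec_var z s y t k : z <> y -> lc s ->
  subst z s (open_rec k (FVar y) t) = open_rec k (FVar y) (subst z s t).
Proof.
  intros Hzy Hs; revert k; induction t; intros k; simpl; f_equal; auto.
  - destruct (Nat.eqb_spec n k); simpl; auto.
    destruct (Nat.eqb_spec y z); congruence.
  - destruct (Nat.eqb_spec n z); simpl; auto.
Qed.

Lemma subst_open_rec_intro z u t k : ~ In z (fv t) ->
  subst z u (open_rec k (FVar z) t) = open_rec k u t.
Proof.
  revert k; induction t; intros k; simpl; rewrite ?in_app_iff; intros Hz; f_equal;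
    try firstorder.
  - destruct (Nat.eqb_spec n k); simpl; auto. now rewrite Nat.eqb_refl.
  - destruct (Nat.eqb_spec n z); subst; tauto.
Qed.

Lemma open_rec_term_core t a b u v : a <> b ->
  open_rec a u (open_rec b v t) = open_rec b v t -> open_rec a u t = t.
Proof.
  revert a b; induction t; intros a b Hab H; simpl in *; injection H || idtac;
    intros; f_equal; eauto.
  destruct (Nat.eqb_spec n a); auto; subst.
  destruct (Nat.eqb_spec a b); [congruence|].
  simpl in H; rewrite Nat.eqb_refl in H; auto.
Qed.

Inductive atom : Type := AVar (x : nat) | ARes (n : nat).

Definition rctx := list (atom * ty).

Fixpoint ctx_vars (G : rctx) : list nat :=
  match G with
  | [] => []
  | (AVar x, _) :: G' => x :: ctx_vars G'
  | (ARes _, _) :: G' => ctx_vars G'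
  end.

Fixpoint ctx_res (G : rctx) : list nat :=
  match G with
  | [] => []
  | (AVar _, _) :: G' => ctx_res G'
  | (ARes n, _) :: G' => n :: ctx_res G'
  end.

Definition rok (G : rctx) : Prop := NoDup (ctx_vars G).

Lemma ctx_vars_app G1 G2 : ctx_vars (G1 ++ G2) = ctx_vars G1 ++ ctx_vars G2.
Proof. induction G1 as [|[[x|n] A] G1 IH]; simpl; rewrite ?IH; auto. Qed.

Lemma ctx_res_app G1 G2 : ctx_res (G1 ++ G2) = ctx_res G1 ++ ctx_res G2.
Proof. induction G1 as [|[[x|n] A] G1 IH]; simpl; rewrite ?IH; auto. Qed.

Lemma in_ctx_vars x A G : In (AVar x, A) G -> In x (ctx_vars G).
Proof.
  induction G as [|[[y|n] B] G IH]; simpl; intros H; [tauto| |];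
    destruct H as [H|H]; try injection H; try discriminate; auto.
Qed.

(* [typed false] on contexts that may also contain resources, plus [r_res]. *)
Inductive rtyped : rctx -> term -> ty -> Prop :=
| r_var x A : rtyped [(AVar x, A)] (FVar x) A
| r_res n : rtyped [(ARes n, TR)] (Res n) TR
| r_new : rtyped [] New (TLolli TOne (TPlus TR TOne))
| r_delete : rtyped [] Delete (TLolli TR TOne)
| r_let G D t u x A B :
    rtyped D t A -> ~ In x (fv u) ->
    rtyped (G ++ [(AVar x, A)]) (open1 (FVar x) u) B ->
    rok (G ++ D) ->
    rtyped (G ++ D) (Let (polarity A) t u (polarity B)) B
| r_pair G D v w A B :
    rtyped G v A -> rtyped D w B -> rok (G ++ D) ->
    rtyped (G ++ D) (Pair v w) (TTensor A B)
| r_dpair G D G' v t x y A B C :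
    rtyped D v (TTensor A B) ->
    x <> y -> ~ In x (fv t) -> ~ In y (fv t) ->
    rtyped (G ++ [(AVar x, A); (AVar y, B)] ++ G') (open2 (FVar x) (FVar y) t) C ->
    rok (G ++ D ++ G') ->
    rtyped (G ++ D ++ G') (DPair (polarity C) v t) C
| r_unit : rtyped [] Unit TOne
| r_dunit G D G' v t A :
    rtyped D v TOne -> rtyped (G ++ G') t A -> rok (G ++ D ++ G') ->
    rtyped (G ++ D ++ G') (DUnit (polarity A) v t) A
| r_inj1 G v A B : rtyped G v A -> rtyped G (Inj I1 v) (TPlus A B)
| r_inj2 G v A B : rtyped G v B -> rtyped G (Inj I2 v) (TPlus A B)
| r_dcase G D G' v t u x y A B C :
    rtyped D v (TPlus A B) ->
    ~ In x (fv t) ->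
    rtyped (G ++ [(AVar x, A)] ++ G') (open1 (FVar x) t) C ->
    ~ In y (fv u) ->
    rtyped (G ++ [(AVar y, B)] ++ G') (open1 (FVar y) u) C ->
    rok (G ++ D ++ G') ->
    rtyped (G ++ D ++ G') (DCase (polarity C) v t u) C
| r_lam G t x A B :
    ~ In x (fv t) ->
    rtyped ((AVar x, A) :: G) (open1 (FVar x) t) B ->
    rtyped G (Lam t) (TLolli A B)
| r_app G D v w A B :
    rtyped G w A -> rtyped D v (TLolli A B) -> rok (G ++ D) ->
    rtyped (G ++ D) (App (polarity B) v w) B
| r_withp G t u A B :
    rtyped G t A -> rtyped G u B -> rtyped G (Withp t u) (TWith A B)
| r_proj G v i A1 A2 :
    rtyped G v (TWith A1 A2) ->
    rtyped G (Proj (polarity (pick i A1 A2)) i v) (pick i A1 A2).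

Definition embed (G : ctx) : rctx := map (fun e => (AVar (fst e), snd e)) G.

Lemma ctx_vars_embed G : ctx_vars (embed G) = map fst G.
Proof. induction G as [|[x A] G IH]; simpl; rewrite ?IH; auto. Qed.

Lemma ordered_rtyped G t A : typed false G t A -> rtyped (embed G) t A.
Proof.
  intros H; remember false as s eqn:Hs.
  induction H; subst; try discriminate; unfold embed in *; rewrite ?map_app in *;
    econstructor; eauto;
    unfold ok, rok in *; rewrite ?ctx_vars_app, ?ctx_vars_embed, <- ?map_app in *; auto.
Qed.

Lemma rtyped_ok G t A : rtyped G t A -> rok G.
Proof.
  induction 1; auto; unfold rok in *; simpl in *; repeat constructor; auto.
  now inversion IHrtyped.
Qed.

Lemma rtyped_fv G t A : rtyped G t A -> incl (fv t) (ctx_vars G).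
Proof.
  induction 1; intros z Hz; simpl in *; unfold open1, open2 in *;
    repeat match goal with
    | IH : incl (fv (open_rec _ _ ?u)) _ |- _ =>
        apply (incl_tran (fv_open_rec_incl u _ _)) in IH
    end;
    rewrite ?in_app_iff in Hz; repeat destruct Hz as [Hz|Hz];
    try match goal with IH : incl (fv ?u) _, Hz : In z (fv ?u) |- _ => pose proof (IH z Hz) end;
    rewrite ?ctx_vars_app in *; simpl in *; rewrite ?in_app_iff in *; simpl in *;
    intuition (subst; tauto).
Qed.

Lemma rtyped_lc G t A : rtyped G t A -> lc t.
Proof.
  unfold lc; induction 1; intros k s; simpl; f_equal; auto.
  - apply open_rec_term_core with (b := 0) (v := FVar x); [lia|apply IHrtyped2].
  - apply open_rec_term_core with (b := 1) (v := FVar x); [lia|].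
    apply open_rec_term_core with (b := 0) (v := FVar y); [lia|apply IHrtyped2].
  - apply open_rec_term_core with (b := 0) (v := FVar x); [lia|apply IHrtyped2].
  - apply open_rec_term_core with (b := 0) (v := FVar y); [lia|apply IHrtyped3].
  - apply open_rec_term_core with (b := 0) (v := FVar x); [lia|apply IHrtyped].
Qed.

Lemma rtyped_closed G t A : rtyped G t A -> ctx_vars G = [] -> fv t = [].
Proof.
  intros Ht HG; destruct (fv t) as [|z zs] eqn:E; auto.
  specialize (rtyped_fv _ _ _ Ht z); rewrite E, HG; simpl; tauto.
Qed.

Definition assigns (x : nat) (A : ty) (G : rctx) : Prop :=
  forall B, In (AVar x, B) G -> B = A.

Lemma rok_split G1 x A G2 : rok (G1 ++ (AVar x, A) :: G2) ->
  ~ In x (ctx_vars G1) /\ ~ In x (ctx_vars G2).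
Proof.
  unfold rok; rewrite ctx_vars_app; simpl; intros H.
  apply NoDup_remove_2 in H; rewrite in_app_iff in H; tauto.
Qed.

Lemma rok_assigns G1 x A G2 : rok (G1 ++ (AVar x, A) :: G2) ->
  assigns x A (G1 ++ (AVar x, A) :: G2).
Proof.
  intros Hok B HB; destruct (rok_split _ _ _ _ Hok) as [H1 H2].
  apply in_app_iff in HB; destruct HB as [HB|[HB|HB]];
    try (apply in_ctx_vars in HB; tauto); congruence.
Qed.

Ltac assigns_sub Hz :=
  let B := fresh "B" in
  intros B ?; apply Hz; rewrite ?in_app_iff in *; simpl in *; intuition congruence.

Section Substitution.

Variables (z : nat) (Dv : rctx) (vv : term) (Av : ty).
Hypotheses (Hvv : rtyped Dv vv Av) (HDv : ctx_vars Dv = []).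

Fixpoint subst_ctx (G : rctx) : rctx :=
  match G with
  | [] => []
  | (AVar y, A) :: G' =>
      if y =? z then Dv ++ subst_ctx G' else (AVar y, A) :: subst_ctx G'
  | e :: G' => e :: subst_ctx G'
  end.

Lemma subst_ctx_app G1 G2 : subst_ctx (G1 ++ G2) = subst_ctx G1 ++ subst_ctx G2.
Proof.
  induction G1 as [|[[y|n] A] G1 IH]; simpl; [|destruct (y =? z)|]; rewrite ?IH, ?app_assoc;
    auto.
Qed.

Lemma subst_ctx_fresh G : ~ In z (ctx_vars G) -> subst_ctx G = G.
Proof.
  induction G as [|[[y|n] A] G IH]; simpl; intros Hz; auto.
  - destruct (Nat.eqb_spec y z); [tauto|]. f_equal; auto.
  - f_equal; auto.
Qed.

Lemma subst_ctx_var y A : y <> z -> subst_ctx [(AVar y, A)] = [(AVar y, A)].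
Proof. intros Hy; simpl; now destruct (Nat.eqb_spec y z). Qed.

Lemma subst_ctx_self A G : subst_ctx ((AVar z, A) :: G) = Dv ++ subst_ctx G.
Proof. simpl; now rewrite Nat.eqb_refl. Qed.

Lemma rok_subst_ctx G : rok G -> rok (subst_ctx G).
Proof.
  enough (E : ctx_vars (subst_ctx G) = filter (fun y => negb (y =? z)) (ctx_vars G)).
  { unfold rok; rewrite E; apply NoDup_filter. }
  induction G as [|[[y|n] A] G IH]; simpl; auto.
  destruct (y =? z); simpl; rewrite ?ctx_vars_app, ?HDv, IH; auto.
Qed.

Lemma fv_subst_notin x u : ~ In x (fv u) -> ~ In x (fv (subst z vv u)).
Proof.
  intros Hx Hi; destruct (fv_subst _ _ _ _ Hi) as [H|H]; [tauto|].
  now rewrite (rtyped_closed _ _ _ Hvv HDv) in H.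
Qed.

Lemma subst_open_var k x u : x <> z ->
  subst z vv (open_rec k (FVar x) u) = open_rec k (FVar x) (subst z vv u).
Proof. intros; apply subst_open_rec_var; eauto using rtyped_lc. Qed.

(* When the binder [x] is [z] itself, [z] occurs neither in the body nor in
   the rest of its context, so the induction hypothesis is only needed for
   [x <> z]. *)
Lemma rtyped_subst_body G x A G' u B :
  ~ In x (fv u) -> rtyped (G ++ [(AVar x, A)] ++ G') (open1 (FVar x) u) B ->
  (x <> z -> rtyped (subst_ctx (G ++ [(AVar x, A)] ++ G')) (subst z vv (open1 (FVar x) u)) B) ->
  rtyped (subst_ctx G ++ [(AVar x, A)] ++ subst_ctx G') (open1 (FVar x) (subst z vv u)) B.
Proof.
  intros Hx Hu IH; destruct (Nat.eq_dec x z) as [->|Hxz].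
  - destruct (rok_split _ _ _ _ (rtyped_ok _ _ _ Hu)).
    now rewrite !subst_ctx_fresh, subst_fresh.
  - specialize (IH Hxz); unfold open1 in *.
    now rewrite !subst_ctx_app, (subst_ctx_var _ _ Hxz), subst_open_var in IH.
Qed.

Lemma rtyped_subst_body2 G x A y B G' t C :
  x <> y -> ~ In x (fv t) -> ~ In y (fv t) ->
  rtyped (G ++ [(AVar x, A); (AVar y, B)] ++ G') (open2 (FVar x) (FVar y) t) C ->
  (x <> z -> y <> z ->
   rtyped (subst_ctx (G ++ [(AVar x, A); (AVar y, B)] ++ G'))
     (subst z vv (open2 (FVar x) (FVar y) t)) C) ->
  rtyped (subst_ctx G ++ [(AVar x, A); (AVar y, B)] ++ subst_ctx G')
    (open2 (FVar x) (FVar y) (subst z vv t)) C.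
Proof.
  intros Hxy Hx Hy Ht IH; pose proof (rtyped_ok _ _ _ Ht) as Hok.
  destruct (Nat.eq_dec x z) as [->|Hxz]; [|destruct (Nat.eq_dec y z) as [->|Hyz]].
  - destruct (rok_split G z A ((AVar y, B) :: G') Hok) as [H1 H2]; simpl in H2.
    now rewrite !subst_ctx_fresh, subst_fresh by tauto.
  - destruct (rok_split (G ++ [(AVar x, A)]) z B G') as [H1 H2].
    { now rewrite <- app_assoc. }
    rewrite ctx_vars_app, in_app_iff in H1; simpl in H1.
    now rewrite !subst_ctx_fresh, subst_fresh by tauto.
  - specialize (IH Hxz Hyz); unfold open2 in *; simpl in IH.
    rewrite subst_ctx_app in IH; simpl in IH.
    rewrite (proj2 (Nat.eqb_neq _ _) Hxz), (proj2 (Nat.eqb_neq _ _) Hyz) in IH.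
    now rewrite !subst_open_var in IH.
Qed.

Lemma rtyped_subst G t B : rtyped G t B -> assigns z Av G ->
  rtyped (subst_ctx G) (subst z vv t) B.
Proof.
  induction 1; intros Hz; simpl subst; rewrite ?subst_ctx_app.
  - simpl; destruct (Nat.eqb_spec x z) as [->|]; [|constructor].
    rewrite app_nil_r, (Hz A) by now left. exact Hvv.
  - constructor.
  - constructor.
  - constructor.
  - apply r_let with (x := x).
    + apply IHrtyped1; assigns_sub Hz.
    + now apply fv_subst_notin.
    + apply (rtyped_subst_body G x A []); auto.
      intros Hxz; apply IHrtyped2; assigns_sub Hz.
    + rewrite <- subst_ctx_app; auto using rok_subst_ctx.
  - apply r_pair; [apply IHrtyped1 | apply IHrtyped2 |]; try assigns_sub Hz.
    rewrite <- subst_ctx_app; auto using rok_subst_ctx.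
  - apply r_dpair with (x := x) (y := y) (A := A) (B := B); auto using fv_subst_notin.
    + apply IHrtyped1; assigns_sub Hz.
    + apply rtyped_subst_body2; auto.
      intros Hxz Hyz; apply IHrtyped2; assigns_sub Hz.
    + rewrite <- !subst_ctx_app; auto using rok_subst_ctx.
  - constructor.
  - apply r_dunit.
    + apply IHrtyped1; assigns_sub Hz.
    + rewrite <- subst_ctx_app; apply IHrtyped2; assigns_sub Hz.
    + rewrite <- !subst_ctx_app; auto using rok_subst_ctx.
  - apply r_inj1; auto.
  - apply r_inj2; auto.
  - apply r_dcase with (x := x) (y := y) (A := A) (B := B); auto using fv_subst_notin.
    + apply IHrtyped1; assigns_sub Hz.
    + apply rtyped_subst_body; auto.
      intros Hxz; apply IHrtyped2; assigns_sub Hz.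
    + apply rtyped_subst_body; auto.
      intros Hyz; apply IHrtyped3; assigns_sub Hz.
    + rewrite <- !subst_ctx_app; auto using rok_subst_ctx.
  - apply r_lam with (x := x); auto using fv_subst_notin.
    apply (rtyped_subst_body [] x A G); auto.
    intros Hxz; apply IHrtyped; assigns_sub Hz.
  - apply r_app with (A := A); [apply IHrtyped1 | apply IHrtyped2 |]; try assigns_sub Hz.
    rewrite <- subst_ctx_app; auto using rok_subst_ctx.
  - apply r_withp; auto.
  - apply r_proj; auto.
Qed.

End Substitution.

Lemma rtyped_open1 G x A G' u B D v :
  ~ In x (fv u) -> rtyped (G ++ [(AVar x, A)] ++ G') (open1 (FVar x) u) B ->
  rtyped D v A -> ctx_vars D = [] -> rtyped (G ++ D ++ G') (open1 v u) B.
Proof.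
  intros Hx Hu Hv HD; pose proof (rtyped_ok _ _ _ Hu) as Hok.
  destruct (rok_split _ _ _ _ Hok) as [HG HG'].
  pose proof (rtyped_subst x D v A Hv HD _ _ _ Hu (rok_assigns _ _ _ _ Hok)) as H.
  rewrite subst_ctx_app in H; cbn [app] in H.
  rewrite subst_ctx_self, !subst_ctx_fresh in H by assumption.
  unfold open1 in *; now rewrite subst_open_rec_intro in H.
Qed.

Lemma rtyped_open1_last G x A u B D v :
  ~ In x (fv u) -> rtyped (G ++ [(AVar x, A)]) (open1 (FVar x) u) B ->
  rtyped D v A -> ctx_vars D = [] -> rtyped (G ++ D) (open1 v u) B.
Proof.
  intros; rewrite <- (app_nil_r D); now apply (rtyped_open1 G x A []).
Qed.

Lemma rtyped_open2 G x A y B G' t C D1 D2 v w :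
  x <> y -> ~ In x (fv t) -> ~ In y (fv t) ->
  rtyped (G ++ [(AVar x, A); (AVar y, B)] ++ G') (open2 (FVar x) (FVar y) t) C ->
  rtyped D1 v A -> rtyped D2 w B -> ctx_vars D1 = [] -> ctx_vars D2 = [] ->
  rtyped (G ++ (D1 ++ D2) ++ G') (open2 v w t) C.
Proof.
  intros Hxy Hx Hy Ht Hv Hw HD1 HD2; pose proof (rtyped_ok _ _ _ Ht) as Hok.
  destruct (rok_split G x A ((AVar y, B) :: G') Hok) as [HG HG'].
  pose proof (rtyped_subst x D1 v A Hv HD1 _ _ _ Ht (rok_assigns _ _ _ _ Hok)) as H.
  rewrite subst_ctx_app in H; cbn [app] in H.
  rewrite subst_ctx_self, !subst_ctx_fresh in H by assumption.
  unfold open2 in H; rewrite subst_open_rec_var, subst_open_rec_intro in H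
    by eauto using rtyped_lc.
  replace (G ++ (D1 ++ D2) ++ G') with ((G ++ D1) ++ D2 ++ G') by now rewrite <- !app_assoc.
  apply (rtyped_open1 (G ++ D1) y B G'); auto.
  - intros Hi; destruct (fv_open_rec _ _ _ _ Hi) as [Hi'|Hi']; [tauto|].
    now rewrite (rtyped_closed _ _ _ Hv HD1) in Hi'.
  - now rewrite <- app_assoc.
Qed.

Inductive ftyped : rctx -> frame -> ty -> ty -> Prop :=
| f_arg G w e A B : rtyped G w A -> ftyped G (FArg w e) (TLolli A B) B
| f_proj i e A1 A2 : ftyped [] (FProj i e) (TWith A1 A2) (pick i A1 A2)
| f_let G u e x A B :
    ~ In x (fv u) -> rtyped (G ++ [(AVar x, A)]) (open1 (FVar x) u) B ->
    ftyped G (FLet u e) A B.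

Inductive styped : rctx -> stack -> ty -> ty -> Prop :=
| s_nil A : styped [] [] A A
| s_cons S G f s A B C :
    ftyped G f A B -> styped S s B C -> styped (S ++ G) (f :: s) A C.

Definition cmd_typed (l0 : list nat) (W : ty) (c : cmd) : Prop :=
  exists S D A, styped S (c_stack c) A W /\ rtyped D (c_term c) A /\
    ctx_vars (S ++ D) = [] /\ ctx_res (S ++ D) ++ c_free c = l0.

Ltac invert_redex :=
  repeat match goal with
  | H : styped _ (_ :: _) _ _ |- _ => inversion H; subst; clear H
  | H : ftyped _ _ _ _ |- _ => inversion H; subst; clear H
  | H : rtyped _ ?t _ |- _ =>
      match t with
      | Let _ _ _ _ => idtac | App _ _ _ => idtac | Proj _ _ _ => idtac
      | Lam _ => idtac | Withp _ _ => idtac | Pair _ _ => idtac | Inj _ _ => idtac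
      | DPair _ _ _ => idtac | DUnit _ _ _ => idtac | DCase _ _ _ _ => idtac
      | Unit => idtac | Res _ => idtac | New => idtac | Delete => idtac
      end; inversion H; subst; clear H
  end.

Lemma step_cmd_typed l0 W c c' : step c c' -> cmd_typed l0 W c -> cmd_typed l0 W c'.
Proof.
  intros Hst (S & D & A & Hs & Ht & Hvars & <-).
  destruct Hst; simpl in *; invert_redex.
  all: pose proof Hvars as Hvs; rewrite ?ctx_vars_app in Hvs;
    repeat match goal with H : _ ++ _ = [] |- _ => apply app_eq_nil in H as [? ?] end.
  - exists S, (G ++ D0), A; repeat split; eauto using rtyped_open1_last.
  - exists (S ++ G), D0, A0; rewrite <- app_assoc; repeat split; auto.
    apply s_cons with (B := A); auto; econstructor; eauto.
  - exists S0, (G ++ D), B; rewrite <- app_assoc in *; repeat split;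
      eauto using rtyped_open1_last.
  - exists (S ++ G), D0, (TLolli A0 A); rewrite <- app_assoc; repeat split; auto.
    apply s_cons with (B := A); auto; now constructor.
  - exists S0, (G ++ D), B; rewrite <- app_assoc in *; repeat split; auto.
    eapply (rtyped_open1 []); eauto.
  - exists S, D, (TWith A1 A2); repeat split; auto.
    rewrite <- (app_nil_r S); apply s_cons with (B := pick i A1 A2); [constructor | exact Hs].
  - exists S0, D, (pick i A1 A2); rewrite !app_nil_r in *; repeat split; auto.
    destruct i; auto.
  - exists S, (G ++ (G0 ++ D) ++ G'), A; repeat split; auto.
    eapply rtyped_open2; eauto.
  - exists S, (G ++ G'), A; repeat split; auto.
  - exists S, (G ++ D0 ++ G'), A; repeat split; auto; eapply rtyped_open1; eauto.
  - exists S, (G ++ D0 ++ G'), A; repeat split; auto; eapply rtyped_open1; eauto.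
  - exists S0, [(ARes n, TR)], (TPlus TR TOne); repeat split; auto.
    + repeat constructor.
    + now rewrite ctx_vars_app, (app_nil_r S0) in *.
    + now rewrite !app_nil_r, ctx_res_app, <- app_assoc.
  - exists S0, [], (TPlus TR TOne); rewrite !app_nil_r in *; repeat split; auto.
    repeat constructor.
  - exists S0, [], TOne; repeat split; auto.
    + constructor.
    + now rewrite app_nil_r.
    + now rewrite !app_nil_r, ctx_res_app, <- app_assoc.
Qed.

Lemma star_cmd_typed l0 W c c' : star c c' -> cmd_typed l0 W c -> cmd_typed l0 W c'.
Proof. induction 1; eauto using step_cmd_typed. Qed.

Lemma central_positive W : central W -> polarity W = PPos.
Proof. now destruct 1. Qed.

Lemma central_value_resource_free v D W :
  central W -> is_val v -> rtyped D v W -> ctx_res D = [].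
Proof.
  revert D W; induction v; intros D W Hc Hv Ht;
    inversion Hv; subst; inversion Ht; subst;
    try (pose proof (central_positive _ Hc); congruence);
    inversion Hc; subst; simpl; eauto.
  rewrite ctx_res_app, (IHv1 G A), (IHv2 D0 B); auto.
Qed.

Theorem proposition1 :
  forall (W : ty) (t v : term) (l l' : list nat) (e : pol),
    central W ->
    is_exp t ->
    typed false [] t W ->
    is_val v ->
    typed true [] v W ->
    star (Cmd t [] l PPos) (Cmd v [] l' e) ->
    l' = l.
Proof.
  intros W t v l l' e Hc _ Ht Hv _ Hrun.
  assert (Hinit : cmd_typed l W (Cmd t [] l PPos)).
  { exists [], [], W; repeat split; [apply s_nil | exact (ordered_rtyped [] t W Ht)]. }
  destruct (star_cmd_typed _ _ _ _ Hrun Hinit) as (S & D & A & Hs & HvD & _ & <-).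
  inversion Hs; subst; simpl in *.
  now rewrite (central_value_resource_free v D W).
Qed.
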